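(* Let $F_0$ and $F_s$ be distribution functions, $U_r(t):=F_r^{\leftarrow}(1-1/t)=\bigl(1/(1-F_r)\bigr)^{\leftarrow}(t)$ for $t>1$, $r\in\{0,s\}$, and let $c\in\mathbb{R}$, $s\ge0$. Suppose $F_0$ is in the max-domain of attraction of $G_\gamma(x)=\exp\{-(1+\gamma x)^{-1/\gamma}\}$ with $\gamma>0$. Then $$\lim_{x\to\infty}\frac{1-F_s(x)}{1-F_0(x)}=e^{cs}\quad\Longleftrightarrow\quad\lim_{t\to\infty}\frac{U_s(t)}{U_0(t)}=e^{c\gamma s}.$$
   Context: $F^{\leftarrow}$ denotes the generalized (left-continuous) inverse. For $\gamma>0$ the right endpoint of $F_0$ is $+\infty$. *)

From Stdlib Require Import Reals.
From Coquelicot Require Import Coquelicot.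
Open Scope R_scope.

Definition distribution_function (F : R -> R) : Prop :=
  (forall x y, x <= y -> F x <= F y) /\
  (forall x, filterlim F (at_right x) (locally (F x))) /\
  is_lim F m_infty 0 /\
  is_lim F p_infty 1.

(* Generalized (left-continuous) inverse: F^<-(p) = inf { x | F x >= p }.
   For p in (0,1) and F a distribution function this infimum is finite. *)
Definition gen_inv (F : R -> R) (p : R) : R :=
  real (Glb_Rbar (fun x => p <= F x)).

Definition U (F : R -> R) (t : R) : R := gen_inv F (1 - / t).

Definition G (gamma x : R) : R :=
  if Req_EM_T gamma 0 then exp (- exp (- x))
  else if Rlt_dec 0 (1 + gamma * x) then exp (- Rpower (1 + gamma * x) (- / gamma))
  else if Rlt_dec 0 gamma then 0 else 1.

(* F is in the max-domain of attraction of G_gamma: there exist a_n > 0 and b_n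
   with F(a_n x + b_n)^n -> G_gamma(x) at every continuity point x of G_gamma
   (for gamma > 0, G_gamma is continuous, so at every x). *)
Definition max_domain_of_attraction (F : R -> R) (gamma : R) : Prop :=
  exists (a b : nat -> R), (forall n, 0 < a n) /\
    forall x, continuous (G gamma) x ->
      is_lim_seq (fun n => (F (a n * x + b n)) ^ n) (G gamma x).

(* Since F0 lies in the max-domain of attraction of G_gamma with gamma > 0, taking
   logarithms in F0(a_n x + b_n)^n -> G_gamma(x) gives
   n (1 - F0(a_n x + b_n)) -> (1 + gamma x)^(-1/gamma).  Comparing the indices n and
   2n shows a_(2n) ~ 2^gamma a_n and b_n ~ a_n / gamma, and evaluating at
   n ~ 1 / (1 - F0(y)) then shows that the tail 1 - F0 is positive and regularly
   varying with index -1/gamma.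
   Regular variation turns tail comparisons into quantile comparisons and back:
   if 1 - Fs <= k' (1 - F0) eventually with k' slightly above k, then at
   y = U0(t) one gets 1 - Fs(mu y) <= 1/t for mu slightly above k^gamma, so
   Us(t) <= mu U0(t); conversely one inverts at t = 1/(1 - F0(y)).  With matching
   lower bounds, (1 - Fs)/(1 - F0) -> k iff Us/U0 -> k^gamma, here with k = e^(cs). *)

From Stdlib Require Import Reals ZArith Lra Lia Classical Wf_nat.
From Coquelicot Require Import Coquelicot.
Open Scope R_scope.

Lemma eventually_lt_of_is_lim (f : R -> R) (L c : R) :
  is_lim f p_infty L -> L < c -> Rbar_locally p_infty (fun x => f x < c).
Proof. intros Hf Hc. exact (Hf _ (open_lt c L Hc)). Qed.

Lemma eventually_gt_of_is_lim (f : R -> R) (L c : R) :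
  is_lim f p_infty L -> c < L -> Rbar_locally p_infty (fun x => c < f x).
Proof. intros Hf Hc. exact (Hf _ (open_gt c L Hc)). Qed.

Lemma is_lim_seq_eventually_close (u : nat -> R) (l eps : R) :
  is_lim_seq u l -> 0 < eps -> eventually (fun n => Rabs (u n - l) < eps).
Proof. intros H Heps. exact (proj2 (is_lim_seq_spec u l) H (mkposreal eps Heps)). Qed.

Lemma eventually_scale (c : R) (P : R -> Prop) :
  0 < c -> Rbar_locally p_infty P -> Rbar_locally p_infty (fun x => P (c * x)).
Proof.
  intros Hc [M HM]. exists (M / c). intros x Hx. apply HM.
  apply (Rmult_lt_compat_l c) in Hx; auto. field_simplify in Hx; lra.
Qed.

Lemma eventually_unscale (c : R) (P : R -> Prop) :
  0 < c -> Rbar_locally p_infty (fun y => P (c * y)) -> Rbar_locally p_infty P.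
Proof.
  intros Hc H. apply (eventually_scale (/ c)) in H; [|now apply Rinv_0_lt_compat].
  revert H. apply filter_imp. intros x.
  now rewrite <- Rmult_assoc, Rinv_r, Rmult_1_l by lra.
Qed.

Lemma is_lim_ratio_of_bounds (f g : R -> R) (L : R) :
  0 < L -> Rbar_locally p_infty (fun x => 0 < g x) ->
  (forall L', L < L' -> Rbar_locally p_infty (fun x => f x <= L' * g x)) ->
  (forall L', 0 < L' < L -> Rbar_locally p_infty (fun x => L' * g x <= f x)) ->
  is_lim (fun x => f x / g x) p_infty L.
Proof.
  intros HL Hg Hup Hlo. apply is_lim_spec. intros [eps Heps].
  cut (Rbar_locally p_infty (fun x => Rabs (f x / g x - L) < eps)); [auto|].
  set (e := Rmin (eps / 2) (L / 2)).
  assert (He : 0 < e) by (apply Rmin_pos; lra).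
  assert (He1 : e <= eps / 2) by apply Rmin_l.
  assert (He2 : e <= L / 2) by apply Rmin_r.
  specialize (Hup (L + e) ltac:(lra)). specialize (Hlo (L - e) ltac:(lra)).
  generalize (filter_and _ _ Hg (filter_and _ _ Hup Hlo)).
  apply filter_imp. intros x (Hgx & Hfu & Hfl).
  assert (Hq : f x / g x - L = (f x - L * g x) / g x) by (field; lra).
  rewrite Hq, Rabs_div, (Rabs_pos_eq (g x)) by lra.
  apply Rmult_lt_reg_r with (g x); auto.
  unfold Rdiv. rewrite Rmult_assoc, Rinv_l, Rmult_1_r by lra.
  apply Rabs_def1; nra.
Qed.

Lemma bounds_of_is_lim_ratio (f g : R -> R) (L : R) :
  Rbar_locally p_infty (fun x => 0 < g x) -> is_lim (fun x => f x / g x) p_infty L ->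
  (forall L', L < L' -> Rbar_locally p_infty (fun x => f x <= L' * g x)) /\
  (forall L', L' < L -> Rbar_locally p_infty (fun x => L' * g x <= f x)).
Proof.
  intros Hg Hlim. split; intros L' HL'.
  - generalize (filter_and _ _ Hg (eventually_lt_of_is_lim _ _ _ Hlim HL')).
    apply filter_imp. intros x [Hgx Hx].
    replace (f x) with (f x / g x * g x) by (field; lra). nra.
  - generalize (filter_and _ _ Hg (eventually_gt_of_is_lim _ _ _ Hlim HL')).
    apply filter_imp. intros x [Hgx Hx].
    replace (f x) with (f x / g x * g x) by (field; lra). nra.
Qed.

Lemma Rpower_pos (x y : R) : 0 < Rpower x y.
Proof. apply exp_pos. Qed.

Lemma Rpower_inv_cancel (x g : R) : 0 < g -> 0 < x -> Rpower (Rpower x g) (/ g) = x.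
Proof.
  intros Hg Hx. rewrite Rpower_mult. replace (g * / g) with 1 by (field; lra).
  now apply Rpower_1.
Qed.

Lemma lt_Rpower_inv (a b g : R) : 0 < g -> 0 < a -> Rpower a g < b -> a < Rpower b (/ g).
Proof.
  intros Hg Ha Hab. rewrite <- (Rpower_inv_cancel a g) by auto.
  apply Rlt_Rpower_l; [now apply Rinv_0_lt_compat|]. split; [apply Rpower_pos|auto].
Qed.

Lemma Rpower_inv_lt (a b g : R) : 0 < g -> 0 < a -> 0 < b -> b < Rpower a g -> Rpower b (/ g) < a.
Proof.
  intros Hg Ha Hb Hab. apply Rlt_le_trans with (Rpower (Rpower a g) (/ g)).
  2: now rewrite Rpower_inv_cancel; auto; right.
  apply Rlt_Rpower_l; [now apply Rinv_0_lt_compat|]. lra.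
Qed.

(** * Tails and quantiles *)

Definition tail (F : R -> R) (x : R) : R := 1 - F x.

Section DistributionFunction.
Variable F : R -> R.
Hypothesis HF : distribution_function F.

Lemma df_monotone x y : x <= y -> F x <= F y.
Proof. apply HF. Qed.

Lemma tail_nonincreasing x y : x <= y -> tail F y <= tail F x.
Proof. intros Hxy. unfold tail. generalize (df_monotone x y Hxy). lra. Qed.

Lemma is_lim_tail : is_lim (tail F) p_infty 0.
Proof.
  replace (Finite 0) with (Finite (1 - 1)) by (f_equal; ring).
  apply (is_lim_minus (fun _ => 1) F p_infty 1 1); [apply is_lim_const|apply HF|].
  reflexivity.
Qed.

Lemma df_le_1 x : F x <= 1.
Proof.
  destruct (Rle_dec (F x) 1) as [h|h]; auto. exfalso.
  destruct (eventually_lt_of_is_lim F 1 (F x) (proj2 (proj2 (proj2 HF))))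
    as [M HM]; [lra|].
  generalize (HM (Rmax M x + 1) ltac:(generalize (Rmax_l M x); lra)).
  generalize (df_monotone x (Rmax M x + 1) ltac:(generalize (Rmax_r M x); lra)).
  lra.
Qed.

Lemma df_ge_0 x : 0 <= F x.
Proof.
  destruct (Rle_dec 0 (F x)) as [h|h]; auto. exfalso.
  destruct (proj2 (is_lim_spec F m_infty 0) (proj1 (proj2 (proj2 HF)))
    (mkposreal (- F x) ltac:(lra))) as [M HM].
  specialize (HM (Rmin M x - 1) ltac:(generalize (Rmin_l M x); lra)). simpl in HM.
  generalize (df_monotone (Rmin M x - 1) x ltac:(generalize (Rmin_r M x); lra)).
  apply Rabs_def2 in HM. lra.
Qed.

Lemma gen_inv_finite p : 0 < p < 1 -> Glb_Rbar (fun x => p <= F x) = gen_inv F p.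
Proof.
  intros Hp. unfold gen_inv.
  destruct (Glb_Rbar_correct (fun x => p <= F x)) as [Hlb Hglb].
  destruct (Glb_Rbar (fun x => p <= F x)) as [r| |]; auto; exfalso.
  - destruct (eventually_gt_of_is_lim F 1 p (proj2 (proj2 (proj2 HF))))
      as [M HM]; [lra|].
    apply (Hlb (M + 1)). left. apply HM. lra.
  - destruct (proj2 (is_lim_spec F m_infty 0) (proj1 (proj2 (proj2 HF)))
      (mkposreal p ltac:(lra))) as [m Hm].
    apply (Hglb (Finite m)). intros x Hx. simpl.
    destruct (Rle_dec m x) as [h|h]; auto.
    specialize (Hm x ltac:(lra)). simpl in Hm. apply Rabs_def2 in Hm. lra.
Qed.

Lemma gen_inv_le p x : 0 < p < 1 -> p <= F x -> gen_inv F p <= x.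
Proof.
  intros Hp Hx. destruct (Glb_Rbar_correct (fun x => p <= F x)) as [Hlb _].
  generalize (Hlb x Hx). now rewrite (gen_inv_finite p Hp).
Qed.

Lemma le_gen_inv p x : 0 < p < 1 -> F x < p -> x <= gen_inv F p.
Proof.
  intros Hp Hx.
  destruct (Glb_Rbar_correct (fun x => p <= F x)) as [_ Hglb].
  assert (H : Rbar_le x (Glb_Rbar (fun x => p <= F x))).
  { apply Hglb. intros y Hy. simpl. destruct (Rle_dec x y) as [h|h]; auto.
    generalize (df_monotone y x ltac:(lra)). lra. }
  rewrite (gen_inv_finite p Hp) in H. exact H.
Qed.

Lemma le_of_gen_inv_lt p z : 0 < p < 1 -> gen_inv F p < z -> p <= F z.
Proof.
  intros Hp Hz.
  destruct (classic (exists w, p <= F w /\ w < z)) as [[w [Hw1 Hw2]]|Hn].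
  - apply Rle_trans with (F w); auto. apply df_monotone; lra.
  - destruct (Glb_Rbar_correct (fun x => p <= F x)) as [_ Hglb].
    assert (H : Rbar_le z (Glb_Rbar (fun x => p <= F x))).
    { apply Hglb. intros y Hy. simpl. destruct (Rle_dec z y) as [h|h]; auto.
      exfalso. apply Hn. exists y. split; auto; lra. }
    rewrite (gen_inv_finite p Hp) in H. simpl in H. lra.
Qed.

Lemma lt_of_lt_gen_inv p z : 0 < p < 1 -> z < gen_inv F p -> F z < p.
Proof.
  intros Hp Hz. destruct (Rlt_dec (F z) p) as [h|h]; auto.
  generalize (gen_inv_le p z Hp ltac:(lra)). lra.
Qed.

Lemma quantile_level t : 1 < t -> 0 < 1 - / t < 1.
Proof.
  intros Ht. assert (0 < / t) by (apply Rinv_0_lt_compat; lra).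
  assert (/ t < 1) by (rewrite <- Rinv_1; apply Rinv_lt_contravar; lra). lra.
Qed.

Lemma U_le_of_tail_le t x : 1 < t -> tail F x <= / t -> U F t <= x.
Proof. intros Ht Hx. apply gen_inv_le; [now apply quantile_level|]. unfold tail in Hx. lra. Qed.

Lemma le_U_of_lt_tail t x : 1 < t -> / t < tail F x -> x <= U F t.
Proof. intros Ht Hx. apply le_gen_inv; [now apply quantile_level|]. unfold tail in Hx. lra. Qed.

Lemma tail_le_of_U_lt t x : 1 < t -> U F t < x -> tail F x <= / t.
Proof. intros Ht Hx. unfold tail. generalize (le_of_gen_inv_lt _ x (quantile_level t Ht) Hx). lra. Qed.

Lemma lt_tail_of_lt_U t x : 1 < t -> x < U F t -> / t < tail F x.
Proof. intros Ht Hx. unfold tail. generalize (lt_of_lt_gen_inv _ x (quantile_level t Ht) Hx). lra. Qed.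

End DistributionFunction.

(** * Regular variation of the tail in the domain of attraction *)

Definition regularly_varying (h : R -> R) (rho : R) : Prop :=
  forall lam, 0 < lam -> is_lim (fun x => h (lam * x) / h x) p_infty (Rpower lam rho).

Definition gev_exponent (g x : R) : R := Rpower (1 + g * x) (- / g).

Section GEV.
Variable g : R.
Hypothesis Hg : 0 < g.

Lemma G_eq_exp x : 0 < 1 + g * x -> G g x = exp (- gev_exponent g x).
Proof.
  intros Hx. unfold G, gev_exponent. destruct (Req_EM_T g 0); [lra|].
  destruct (Rlt_dec 0 (1 + g * x)); [auto|lra].
Qed.

Lemma G_continuous x : 0 < 1 + g * x -> continuous (G g) x.
Proof.
  intros Hx.
  apply continuous_ext_loc with (g := fun y => exp (- exp (- / g * ln (1 + g * y)))).
  - assert (Ho : open (fun y => 0 < 1 + g * y)).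
    { apply (open_ext (fun y => - / g < y)); [|apply open_gt].
      intros y. split; intros H.
      + apply (Rmult_lt_compat_l g) in H; auto. field_simplify in H; lra.
      + apply (Rmult_lt_reg_l g); auto. field_simplify; lra. }
    apply (filter_imp (fun y => 0 < 1 + g * y)); [|now apply Ho].
    intros y Hy. now rewrite G_eq_exp.
  - apply (@ex_derive_continuous R_AbsRing R_NormedModule). auto_derive. lra.
Qed.

Lemma gev_exponent_decreasing x y :
  0 < 1 + g * x -> x < y -> gev_exponent g y < gev_exponent g x.
Proof.
  intros Hx Hxy. unfold gev_exponent, Rpower. apply exp_increasing.
  assert (ln (1 + g * x) < ln (1 + g * y)) by (apply ln_increasing; nra).
  assert (0 < / g) by (now apply Rinv_0_lt_compat). nra.
Qed.

Lemma gev_exponent_continuous x : 0 < 1 + g * x -> forall d, 0 < d ->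
  exists e, 0 < e /\ forall y, Rabs (y - x) < e -> Rabs (gev_exponent g y - gev_exponent g x) < d.
Proof.
  intros Hx d Hd.
  assert (Hc : continuity_pt (gev_exponent g) x).
  { apply continuity_pt_filterlim.
    apply (@ex_derive_continuous R_AbsRing R_NormedModule
      (fun y => exp (- / g * ln (1 + g * y)))). auto_derive. lra. }
  destruct (proj1 (continuity_pt_locally _ _) Hc (mkposreal d Hd)) as [[e He] H].
  now exists e.
Qed.

Lemma gev_exponent_0 : gev_exponent g 0 = 1.
Proof. unfold gev_exponent, Rpower. now rewrite Rmult_0_r, Rplus_0_r, ln_1, Rmult_0_r, exp_0. Qed.

Lemma gev_exponent_dilate x : 0 < 1 + g * x ->
  gev_exponent g ((Rpower 2 g * (1 + g * x) - 1) / g) = gev_exponent g x / 2.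
Proof.
  intros Hx. unfold gev_exponent.
  replace (1 + g * ((Rpower 2 g * (1 + g * x) - 1) / g)) with (Rpower 2 g * (1 + g * x))
    by (field; lra).
  rewrite <- Rpower_mult_distr by (auto; apply Rpower_pos).
  rewrite Rpower_mult. replace (g * - / g) with (- (1)) by (field; lra).
  rewrite Rpower_Ropp, Rpower_1 by lra. unfold Rdiv. ring.
Qed.

End GEV.

Lemma one_minus_exp_neg_bounds v : 0 <= v -> v / (1 + v) <= 1 - exp (- v) <= v.
Proof.
  intros Hv. split.
  - assert (exp (- v) <= / (1 + v)).
    { rewrite exp_Ropp. apply Rinv_le_contravar; [lra|]. generalize (exp_ineq1_le v); lra. }
    replace (v / (1 + v)) with (1 - / (1 + v)) by (field; lra). lra.
  - generalize (exp_ineq1_le (- v)). lra.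
Qed.

Lemma is_lim_seq_n_complement_of_pow (u : nat -> R) (p : R) :
  0 < p -> (forall n, 0 <= u n <= 1) -> is_lim_seq (fun n => u n ^ n) (exp (- p)) ->
  is_lim_seq (fun n => INR n * (1 - u n)) p.
Proof.
  intros Hp Hu Hlim. assert (He : 0 < exp (- p)) by apply exp_pos.
  destruct (is_lim_seq_eventually_close _ _ (exp (- p) / 2) Hlim) as [N HN]; [lra|].
  assert (Hpos : forall n, (Nat.max N 1 <= n)%nat -> 0 < u n).
  { intros n Hn. destruct (proj1 (Hu n)) as [h|h]; auto.
    specialize (HN n ltac:(lia)). rewrite <- h, pow_i in HN by lia.
    apply Rabs_def2 in HN. lra. }
  (* Writing u_n = exp (- v_n), the hypothesis reads n v_n -> p. *)
  assert (Hv : is_lim_seq (fun n => INR n * (- ln (u n))) p).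
  { apply is_lim_seq_ext_loc with (u := fun n => - ln (u n ^ n)).
    - exists (Nat.max N 1). intros n Hn. rewrite ln_pow; [ring|]. now apply Hpos.
    - assert (Hln : is_lim_seq (fun n => ln (u n ^ n)) (- p)).
      { rewrite <- (ln_exp (- p)). apply is_lim_seq_continuous; auto.
        apply derivable_continuous_pt. exists (/ exp (- p)). now apply derivable_pt_lim_ln. }
      apply (is_lim_seq_opp _ (Finite (- p))) in Hln. simpl in Hln.
      now rewrite Ropp_involutive in Hln. }
  assert (Hv0 : is_lim_seq (fun n => - ln (u n)) 0).
  { apply is_lim_seq_ext_loc with (u := fun n => INR n * (- ln (u n)) * / INR n).
    - exists 1%nat. intros n Hn. field. apply not_0_INR. lia.
    - replace (Finite 0) with (Finite (p * 0)) by (f_equal; ring).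
      apply is_lim_seq_mult'; auto.
      apply (is_lim_seq_inv _ p_infty is_lim_seq_INR). discriminate. }
  apply is_lim_seq_le_le_loc with
    (u := fun n => INR n * (- ln (u n)) * / (1 + (- ln (u n))))
    (w := fun n => INR n * (- ln (u n))).
  - exists (Nat.max N 1). intros n Hn.
    assert (Hun := Hpos n Hn). set (v := - ln (u n)).
    assert (Huv : u n = exp (- v)) by (unfold v; now rewrite Ropp_involutive, exp_ln).
    assert (Hv1 : 0 <= v).
    { unfold v. assert (ln (u n) <= ln 1) by (apply ln_le; auto; apply Hu).
      rewrite ln_1 in H. lra. }
    assert (Hn0 := pos_INR n).
    destruct (one_minus_exp_neg_bounds v Hv1) as [Hlo Hhi].
    rewrite Huv, Rmult_assoc. split; apply Rmult_le_compat_l; auto.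
  - replace (Finite p) with (Finite (p * / (1 + 0))) by (f_equal; field).
    apply is_lim_seq_mult'; auto. apply (is_lim_seq_inv _ (Finite (1 + 0))).
    + apply is_lim_seq_plus'; auto. apply is_lim_seq_const.
    + intro h. injection h. lra.
  - exact Hv.
Qed.

Lemma mda_normalized_tail (F0 : R -> R) (g : R) :
  distribution_function F0 -> 0 < g -> max_domain_of_attraction F0 g ->
  exists a b : nat -> R, (forall n, 0 < a n) /\ forall x, 0 < 1 + g * x ->
    is_lim_seq (fun n => INR n * tail F0 (a n * x + b n)) (gev_exponent g x).
Proof.
  intros HF Hg [a [b [Ha Hl]]]. exists a, b. split; auto. intros x Hx.
  apply is_lim_seq_n_complement_of_pow; [apply Rpower_pos| |].
  - intros n. split; [apply df_ge_0|apply df_le_1]; auto.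
  - rewrite <- G_eq_exp by auto. apply Hl. now apply G_continuous.
Qed.

Lemma half_index m N : (1 <= N)%nat -> (2 * N <= m)%nat ->
  (N <= m / 2 /\ (m = 2 * (m / 2) \/ m = 2 * (m / 2) + 1) /\ m / 2 < m)%nat.
Proof.
  intros. pose proof (Nat.div_mod m 2 ltac:(lia)).
  pose proof (Nat.mod_upper_bound m 2 ltac:(lia)). lia.
Qed.

Lemma finite_min_pos (A : nat -> R) K :
  (forall n, 0 < A n) -> exists c, 0 < c /\ forall n, (n < K)%nat -> c <= A n.
Proof.
  intros HA. induction K as [|K [c [Hc H]]].
  - exists 1. split; [lra|]. intros n Hn. lia.
  - exists (Rmin c (A K)). split; [now apply Rmin_pos|].
    intros n Hn. destruct (Nat.eq_dec n K) as [->|h]; [apply Rmin_r|].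
    apply Rle_trans with c; [apply Rmin_l|]. apply H. lia.
Qed.

Lemma finite_max_abs (V : nat -> R) K :
  exists M, 0 <= M /\ forall n, (n < K)%nat -> Rabs (V n) <= M.
Proof.
  induction K as [|K [M [HM H]]].
  - exists 0. split; [lra|]. intros n Hn. lia.
  - exists (Rmax M (Rabs (V K))). split; [apply Rle_trans with M; auto; apply Rmax_l|].
    intros n Hn. destruct (Nat.eq_dec n K) as [->|h]; [apply Rmax_r|].
    apply Rle_trans with M; [apply H; lia|apply Rmax_l].
Qed.

(* Along the dyadic ancestry m, m / 2, m / 4, ... of an index the A grow
   geometrically, so increments of V of size o(A n) sum to o(A m). *)
Section Doubling.
Variables (A V : nat -> R) (q : R).
Hypothesis Hq : 1 < q.
Hypothesis HA : forall n, 0 < A n.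
Hypothesis Hd : forall eps, 0 < eps -> eventually (fun n =>
  forall m, (m = 2 * n \/ m = 2 * n + 1)%nat ->
  Rabs (A m - q * A n) <= eps * A n /\ Rabs (V m - V n) <= eps * A n).

Lemma doubling_growth : exists N, (1 <= N)%nat /\ forall n, (N <= n)%nat ->
  forall m, (m = 2 * n \/ m = 2 * n + 1)%nat -> (1 + q) / 2 * A n <= A m.
Proof.
  destruct (Hd ((q - 1) / 2)) as [N HN]; [lra|].
  exists (Nat.max N 1). split; [lia|]. intros n Hn m Hm.
  destruct (HN n ltac:(lia) m Hm) as [H1 _].
  apply Rabs_le_between in H1. assert (HAn := HA n). lra.
Qed.

Lemma doubling_geometric_lower_bound : exists N c, (1 <= N)%nat /\ 0 < c /\
  forall k m, (N * 2 ^ k <= m)%nat -> ((1 + q) / 2) ^ k * c <= A m.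
Proof.
  set (r := (1 + q) / 2).
  destruct doubling_growth as [N [HN1 HN]].
  destruct (finite_min_pos A (2 * N) HA) as [c [Hc Hmin]].
  exists N, c. split; [auto|split; [auto|]].
  induction k as [|k IHk]; intros m Hm.
  - rewrite pow_O, Rmult_1_l. rewrite Nat.pow_0_r, Nat.mul_1_r in Hm. revert Hm.
    induction m as [m IH] using lt_wf_ind. intros Hm.
    destruct (Nat.lt_ge_cases m (2 * N)) as [h|h]; [now apply Hmin|].
    destruct (half_index m N HN1 h) as [h1 [h2 h3]].
    apply Rle_trans with (A (m / 2)); [apply IH; lia|].
    apply Rle_trans with (r * A (m / 2)); [|now apply HN].
    assert (0 < A (m / 2)) by apply HA. unfold r. nra.
  - simpl in Hm.
    assert (h : (2 * N <= m)%nat) by (assert (2 ^ k <> 0)%nat by (apply Nat.pow_nonzero; lia); nia).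
    destruct (half_index m N HN1 h) as [h1 [h2 h3]].
    assert (N * 2 ^ k <= m / 2)%nat.
    { pose proof (Nat.div_mod m 2 ltac:(lia)). pose proof (Nat.mod_upper_bound m 2 ltac:(lia)). nia. }
    apply Rle_trans with (r * A (m / 2)); [|apply HN; lia].
    simpl. rewrite Rmult_assoc. apply Rmult_le_compat_l; [unfold r; lra|]. now apply IHk.
Qed.

Lemma doubling_tends_to_infty M : eventually (fun n => M < A n).
Proof.
  set (r := (1 + q) / 2). assert (Hr : 1 < r) by (unfold r; lra).
  destruct doubling_geometric_lower_bound as [N [c [_ [Hc Hk]]]].
  destruct (INR_unbounded (Rmax 0 (M / (c * (r - 1))))) as [k Hk'].
  exists (N * 2 ^ k)%nat. intros n Hn.
  assert (Hb := Rle_pow_lin (r - 1) k ltac:(lra)). replace (1 + (r - 1)) with r in Hb by ring.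
  assert (M / (c * (r - 1)) < INR k) by (generalize (Rmax_r 0 (M / (c * (r - 1)))); lra).
  assert (M < INR k * (c * (r - 1))).
  { apply (Rmult_lt_compat_r (c * (r - 1))) in H; [|nra].
    unfold Rdiv in H. rewrite Rmult_assoc, Rinv_l in H; [lra|nra]. }
  specialize (Hk k n Hn). fold r in Hk. nra.
Qed.

Lemma doubling_increments_sum_bound eps : 0 < eps <= (q - 1) / 2 ->
  exists N Mv, forall m, (N <= m)%nat -> Rabs (V m) <= Mv + 2 * eps / (q - 1) * A m.
Proof.
  intros He. set (r := (1 + q) / 2). set (C := 2 / (q - 1)).
  assert (HC : 0 < C) by (unfold C; apply Rdiv_lt_0_compat; lra).
  assert (HCr : C + 1 = C * r) by (unfold C, r; field; lra).
  replace (2 * eps / (q - 1)) with (eps * C) by (unfold C; field; lra).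
  destruct (Hd eps (proj1 He)) as [N0 HN0]. set (N := Nat.max N0 1).
  destruct (finite_max_abs V (2 * N)) as [Mv [HMv Hmax]].
  exists N, Mv. induction m as [m IH] using lt_wf_ind. intros Hm. assert (HAm := HA m).
  destruct (Nat.lt_ge_cases m (2 * N)) as [h|h].
  - assert (0 <= eps * C * A m) by (apply Rmult_le_pos; [nra|lra]).
    specialize (Hmax m h). lra.
  - destruct (half_index m N ltac:(unfold N; lia) h) as [h1 [h2 h3]].
    destruct (HN0 (m / 2)%nat ltac:(unfold N in h1; lia) m h2) as [H1 H2].
    specialize (IH (m / 2)%nat h3 h1). assert (HAn := HA (m / 2)).
    apply Rabs_le_between in H1.
    assert (Rabs (V m) <= Rabs (V (m / 2)) + eps * A (m / 2)).
    { replace (V m) with (V (m / 2) + (V m - V (m / 2))) by ring.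
      generalize (Rabs_triang (V (m / 2)) (V m - V (m / 2))). lra. }
    assert (r * A (m / 2) <= A m) by (unfold r; nra).
    assert (eps * C * A (m / 2) + eps * A (m / 2) = eps * (C * r) * A (m / 2))
      by (rewrite <- HCr; ring).
    assert (eps * C * (r * A (m / 2)) <= eps * C * A m) by (apply Rmult_le_compat_l; nra).
    nra.
Qed.

Lemma doubling_increments_negligible eta : 0 < eta ->
  eventually (fun n => Rabs (V n) <= eta * A n).
Proof.
  intros Heta. set (eps := Rmin ((q - 1) / 2) (eta * (q - 1) / 4)).
  assert (He : 0 < eps <= (q - 1) / 2)
    by (split; [apply Rmin_pos; [|apply Rdiv_lt_0_compat]; nra|apply Rmin_l]).
  assert (He2 : 2 * eps / (q - 1) <= eta / 2).
  { assert (eps <= eta * (q - 1) / 4) by apply Rmin_r.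
    apply (Rmult_le_reg_r (q - 1)); [lra|]. unfold Rdiv.
    rewrite Rmult_assoc, (Rmult_assoc 2), Rinv_l by lra. lra. }
  destruct (doubling_increments_sum_bound eps He) as [N [Mv HQ]].
  destruct (doubling_tends_to_infty (2 * Rabs Mv / eta)) as [N1 HN1].
  exists (Nat.max N N1). intros n Hn.
  specialize (HQ n ltac:(lia)). specialize (HN1 n ltac:(lia)).
  assert (Rabs Mv <= eta / 2 * A n).
  { apply (Rmult_lt_compat_l (eta / 2)) in HN1; [|lra].
    replace (eta / 2 * (2 * Rabs Mv / eta)) with (Rabs Mv) in HN1 by (field; lra). lra. }
  assert (2 * eps / (q - 1) * A n <= eta / 2 * A n) by (apply Rmult_le_compat_r; [left; apply HA|lra]).
  generalize (RRle_abs Mv). lra.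
Qed.

End Doubling.

Lemma half_level_close n w p d : 0 <= n -> 0 < p -> p < d * n ->
  Rabs ((2 * n + 1) * w - p) < d -> Rabs (n * w - p / 2) < d.
Proof.
  intros Hn Hp Hd H. apply Rabs_def2 in H.
  assert (E : (2 * n + 1) * (n * w - p / 2) = n * ((2 * n + 1) * w - p) - p / 2) by field.
  assert (B1 : n * ((2 * n + 1) * w - p) <= n * d) by (apply Rmult_le_compat_l; lra).
  assert (B2 : n * (- d) <= n * ((2 * n + 1) * w - p)) by (apply Rmult_le_compat_l; lra).
  apply Rabs_def1; apply (Rmult_lt_reg_l (2 * n + 1)); try lra; rewrite E; nra.
Qed.

Definition level_index (h : R -> R) (y : R) : nat := Z.to_nat (Int_part (/ h y)).

Lemma level_index_spec h y : 0 < h y ->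
  INR (level_index h y) <= / h y < INR (level_index h y) + 1.
Proof.
  intros Hy. assert (Hr : 0 < / h y) by (now apply Rinv_0_lt_compat).
  destruct (base_Int_part (/ h y)) as [H1 H2].
  assert (Hz : (0 <= Int_part (/ h y))%Z).
  { assert (IZR (-1) < IZR (Int_part (/ h y))) by (simpl; lra).
    apply lt_IZR in H. lia. }
  unfold level_index. rewrite INR_IZR_INZ, Z2Nat.id by auto. lra.
Qed.

Section Normalization.
Variables (h : R -> R) (a b : nat -> R) (g : R).
Hypothesis Hg : 0 < g.
Hypothesis Ha : forall n, 0 < a n.
Hypothesis Hh : forall x y, x <= y -> h y <= h x.
Hypothesis Hlim : forall x, 0 < 1 + g * x ->
  is_lim_seq (fun n => INR n * h (a n * x + b n)) (gev_exponent g x).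

Lemma domain_margin x0 e : 0 < 1 + g * x0 -> 0 < e ->
  exists e', 0 < e' <= e /\ 0 < 1 + g * (x0 - e').
Proof.
  intros Hx He. exists (Rmin e ((1 + g * x0) / (2 * g))). split; [split|].
  - apply Rmin_pos; auto. apply Rdiv_lt_0_compat; lra.
  - apply Rmin_l.
  - assert (Rmin e ((1 + g * x0) / (2 * g)) <= (1 + g * x0) / (2 * g)) by apply Rmin_r.
    assert (g * Rmin e ((1 + g * x0) / (2 * g)) <= g * ((1 + g * x0) / (2 * g)))
      by (apply Rmult_le_compat_l; lra).
    replace (g * ((1 + g * x0) / (2 * g))) with ((1 + g * x0) / 2) in H0 by (field; lra).
    nra.
Qed.

(* The level n h z pins down z to within o(a n) of a n x0 + b n, because
   gev_exponent is strictly decreasing. *)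
Lemma close_of_level_close x0 e : 0 < 1 + g * x0 -> 0 < e ->
  exists d, 0 < d /\ eventually (fun n => forall z,
    Rabs (INR n * h z - gev_exponent g x0) < d -> Rabs (z - (a n * x0 + b n)) < e * a n).
Proof.
  intros Hx He. destruct (domain_margin x0 e Hx He) as [e' [[He' He'e] Hm]].
  assert (Hp : 0 < 1 + g * (x0 + e')) by nra.
  set (phi := gev_exponent g).
  assert (Hd1 : phi x0 < phi (x0 - e')) by (apply gev_exponent_decreasing; auto; lra).
  assert (Hd2 : phi (x0 + e') < phi x0) by (apply gev_exponent_decreasing; auto; lra).
  set (d := Rmin (phi (x0 - e') - phi x0) (phi x0 - phi (x0 + e')) / 2).
  assert (Hd : 0 < d) by (unfold d; apply Rdiv_lt_0_compat; [apply Rmin_pos|]; lra).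
  assert (Hdl : 2 * d <= phi (x0 - e') - phi x0)
    by (unfold d; generalize (Rmin_l (phi (x0 - e') - phi x0) (phi x0 - phi (x0 + e'))); lra).
  assert (Hdr : 2 * d <= phi x0 - phi (x0 + e'))
    by (unfold d; generalize (Rmin_r (phi (x0 - e') - phi x0) (phi x0 - phi (x0 + e'))); lra).
  exists d. split; auto.
  destruct (is_lim_seq_eventually_close _ _ d (Hlim _ Hm) Hd) as [N1 HN1].
  destruct (is_lim_seq_eventually_close _ _ d (Hlim _ Hp) Hd) as [N2 HN2].
  exists (Nat.max 1 (Nat.max N1 N2)). intros n Hn z Hz.
  specialize (HN1 n ltac:(lia)). specialize (HN2 n ltac:(lia)). fold phi in HN1, HN2.
  apply Rabs_def2 in HN1, HN2, Hz.
  assert (Hn0 : 0 < INR n) by (apply lt_0_INR; lia).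
  assert (Han := Ha n).
  assert (z < a n * (x0 + e') + b n).
  { destruct (Rlt_dec z (a n * (x0 + e') + b n)) as [h1|h1]; auto.
    assert (h (a n * (x0 + e') + b n) >= h z) by (apply Rle_ge, Hh; lra).
    assert (INR n * h z <= INR n * h (a n * (x0 + e') + b n)) by (apply Rmult_le_compat_l; lra).
    lra. }
  assert (a n * (x0 - e') + b n < z).
  { destruct (Rlt_dec (a n * (x0 - e') + b n) z) as [h1|h1]; auto.
    assert (h (a n * (x0 - e') + b n) <= h z) by (apply Hh; lra).
    assert (INR n * h (a n * (x0 - e') + b n) <= INR n * h z) by (apply Rmult_le_compat_l; lra).
    lra. }
  assert (e' * a n <= e * a n) by (apply Rmult_le_compat_r; lra).
  apply Rabs_def1; nra.
Qed.

Lemma level_close_of_close x0 d : 0 < 1 + g * x0 -> 0 < d ->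
  exists e, 0 < e /\ eventually (fun n => forall z,
    Rabs (z - (a n * x0 + b n)) < e * a n -> Rabs (INR n * h z - gev_exponent g x0) < d).
Proof.
  intros Hx Hd. destruct (gev_exponent_continuous g x0 Hx (d / 2)) as [e1 [He1 Hc]]; [lra|].
  destruct (domain_margin x0 (e1 / 2) Hx) as [e' [[He' He'e] Hm]]; [lra|].
  assert (Hp : 0 < 1 + g * (x0 + e')) by nra.
  exists e'. split; auto.
  destruct (is_lim_seq_eventually_close _ _ (d / 2) (Hlim _ Hm)) as [N1 HN1]; [lra|].
  destruct (is_lim_seq_eventually_close _ _ (d / 2) (Hlim _ Hp)) as [N2 HN2]; [lra|].
  exists (Nat.max N1 N2). intros n Hn z Hz.
  specialize (HN1 n ltac:(lia)). specialize (HN2 n ltac:(lia)).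
  apply Rabs_def2 in HN1, HN2, Hz.
  assert (C1 := Hc (x0 - e') ltac:(rewrite Rabs_left; lra)).
  assert (C2 := Hc (x0 + e') ltac:(rewrite Rabs_right; lra)).
  apply Rabs_def2 in C1, C2.
  assert (Hn0 := pos_INR n). assert (Han := Ha n).
  assert (h z <= h (a n * (x0 - e') + b n)) by (apply Hh; nra).
  assert (h (a n * (x0 + e') + b n) <= h z) by (apply Hh; nra).
  assert (INR n * h z <= INR n * h (a n * (x0 - e') + b n)) by (apply Rmult_le_compat_l; lra).
  assert (INR n * h (a n * (x0 + e') + b n) <= INR n * h z) by (apply Rmult_le_compat_l; lra).
  apply Rabs_def1; lra.
Qed.

Lemma two_pow_gt_1 : 1 < Rpower 2 g.
Proof. rewrite <- (Rpower_O 2) at 1 by lra. apply Rpower_lt; lra. Qed.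

(* Since gev_exponent g (T x) = gev_exponent g x / 2 for the point T x below,
   the level of index m in {2n, 2n+1} at x matches the level of index n at T x. *)
Lemma doubled_index_shift x e : 0 < 1 + g * x -> 0 < e ->
  eventually (fun n => forall m, (m = 2 * n \/ m = 2 * n + 1)%nat ->
    Rabs (a m * x + b m - (a n * ((Rpower 2 g * (1 + g * x) - 1) / g) + b n)) < e * a n).
Proof.
  intros Hx He. set (Tx := (Rpower 2 g * (1 + g * x) - 1) / g).
  assert (HT : 0 < 1 + g * Tx).
  { unfold Tx. replace (1 + g * ((Rpower 2 g * (1 + g * x) - 1) / g))
      with (Rpower 2 g * (1 + g * x)) by (field; lra).
    generalize two_pow_gt_1. nra. }
  destruct (close_of_level_close Tx e HT He) as [d [Hd [N1 HN1]]].
  destruct (is_lim_seq_eventually_close _ _ d (Hlim x Hx) Hd) as [N2 HN2].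
  set (p := gev_exponent g x). assert (Hp : 0 < p) by apply Rpower_pos.
  destruct (INR_unbounded (p / d)) as [N3 HN3].
  exists (Nat.max 1 (Nat.max N1 (Nat.max N2 N3))). intros n Hn m Hm.
  apply HN1; [lia|].
  unfold Tx. rewrite gev_exponent_dilate by auto. fold p.
  specialize (HN2 m ltac:(lia)). fold p in HN2.
  set (w := h (a m * x + b m)) in *.
  assert (HnN3 : INR N3 <= INR n) by (apply le_INR; lia).
  assert (Hnd : p < d * INR n).
  { apply (Rmult_lt_reg_r (/ d)); [now apply Rinv_0_lt_compat|].
    replace (d * INR n * / d) with (INR n) by (field; lra). unfold Rdiv in HN3. lra. }
  destruct Hm as [-> | ->].
  - rewrite mult_INR in HN2. simpl in HN2. apply Rabs_def2 in HN2. apply Rabs_def1; lra.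
  - rewrite plus_INR, mult_INR in HN2. simpl in HN2.
    apply half_level_close; auto. apply pos_INR.
Qed.

Lemma normalization_doubling eps : 0 < eps ->
  eventually (fun n => forall m, (m = 2 * n \/ m = 2 * n + 1)%nat ->
    Rabs (a m - Rpower 2 g * a n) <= eps * a n /\
    Rabs ((b m - a m / g) - (b n - a n / g)) <= eps * a n).
Proof.
  intros He. set (q := Rpower 2 g).
  set (ep := eps * g / (2 * g + 4)).
  assert (Hep : 0 < ep) by (unfold ep; apply Rdiv_lt_0_compat; nra).
  destruct (doubled_index_shift 0 ep ltac:(lra) Hep) as [N0 HN0].
  destruct (doubled_index_shift 1 ep ltac:(lra) Hep) as [N1 HN1].
  exists (Nat.max N0 N1). intros n Hn m Hm.
  specialize (HN0 n ltac:(lia) m Hm). specialize (HN1 n ltac:(lia) m Hm).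
  fold q in HN0, HN1. set (T0 := (q - 1) / g).
  replace ((q * (1 + g * 0) - 1) / g) with T0 in HN0 by (unfold T0; field; lra).
  replace ((q * (1 + g * 1) - 1) / g) with (q + T0) in HN1 by (unfold T0; field; lra).
  apply Rabs_def2 in HN0, HN1. rewrite Rmult_0_r, Rplus_0_l in HN0.
  assert (Han := Ha n).
  set (X := ep * a n) in *. set (Y := eps * a n).
  assert (HX : 2 * X <= Y).
  { assert (2 * ep * (2 * g + 4) = 2 * eps * g) by (unfold ep; field; lra).
    unfold X, Y. nra. }
  assert (HXg : X + 2 * X * / g = Y / 2) by (unfold X, Y, ep; field; lra).
  assert (Hig : 0 < / g) by (now apply Rinv_0_lt_compat).
  set (e1 := b m - (a n * T0 + b n)) in *.
  set (e2 := a m * 1 + b m - (a n * (q + T0) + b n)) in *.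
  assert (E1 : a m - q * a n = e2 - e1) by (unfold e1, e2; ring).
  assert (E2 : (b m - a m / g) - (b n - a n / g) = e1 - (e2 - e1) * / g)
    by (unfold e1, e2, T0; field; lra).
  assert (Hb1 : (e2 - e1) * / g < 2 * X * / g) by (apply Rmult_lt_compat_r; lra).
  assert (Hb2 : - (2 * X) * / g < (e2 - e1) * / g) by (apply Rmult_lt_compat_r; lra).
  rewrite E1, E2. split; apply Rabs_le; lra.
Qed.

Lemma scale_tends_to_infty M : eventually (fun n => M < a n).
Proof.
  exact (doubling_tends_to_infty a (fun n => b n - a n / g) _ two_pow_gt_1 Ha
    normalization_doubling M).
Qed.

Lemma centering_negligible eta : 0 < eta ->
  eventually (fun n => Rabs (b n - a n / g) <= eta * a n).
Proof.
  exact (doubling_increments_negligible a (fun n => b n - a n / g) _ two_pow_gt_1 Ha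
    normalization_doubling eta).
Qed.

Lemma tail_level_pos y : 0 < h y.
Proof.
  assert (H0 : 0 < 1 + g * 0) by lra.
  assert (Hlev := is_lim_seq_eventually_close _ _ (1 / 2) (Hlim 0 H0) ltac:(lra)).
  rewrite gev_exponent_0 in Hlev.
  assert (Hcent := centering_negligible (1 / (2 * g)) ltac:(apply Rdiv_lt_0_compat; lra)).
  destruct (filter_and _ _ Hlev (filter_and _ _ Hcent (scale_tends_to_infty (2 * g * Rabs y))))
    as [N HN].
  destruct (HN N (Nat.le_refl N)) as (Hn & Hb & Hay). clear HN.
  rewrite Rmult_0_r, Rplus_0_l in Hn. apply Rabs_def2 in Hn. apply Rabs_le_between in Hb.
  assert (Han := Ha N).
  assert (Hyb : y <= b N).
  { assert (Rabs y < a N / (2 * g)).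
    { apply (Rmult_lt_reg_l (2 * g)); [lra|].
      replace (2 * g * (a N / (2 * g))) with (a N) by (field; lra). lra. }
    assert (a N / g - 1 / (2 * g) * a N = a N / (2 * g)) by (field; lra).
    generalize (RRle_abs y). lra. }
  apply Rlt_le_trans with (h (b N)); auto.
  destruct (Rlt_dec 0 (h (b N))) as [hb|hb]; auto.
  assert (INR N * h (b N) <= INR N * 0) by (apply Rmult_le_compat_l; [apply pos_INR|lra]).
  lra.
Qed.

Hypothesis Hh0 : is_lim h p_infty 0.

Lemma eventually_along_level_index (P : nat -> Prop) :
  eventually P -> Rbar_locally p_infty (fun y => P (level_index h y)).
Proof.
  intros [N HN]. assert (HN1 : 0 < / (INR N + 1)).
  { apply Rinv_0_lt_compat. generalize (pos_INR N). lra. }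
  generalize (eventually_lt_of_is_lim _ _ _ Hh0 HN1). apply filter_imp. intros y Hy.
  apply HN. assert (Hhy := tail_level_pos y).
  destruct (level_index_spec h y Hhy) as [_ Hlt].
  assert (INR N + 1 < / h y).
  { rewrite <- (Rinv_inv (INR N + 1)). apply Rinv_lt_contravar; auto.
    apply Rmult_lt_0_compat; auto. }
  apply INR_le. lra.
Qed.

Lemma level_index_mul_tends_to_1 :
  is_lim (fun y => INR (level_index h y) * h y) p_infty 1.
Proof.
  apply is_lim_spec. intros [eps Heps].
  cut (Rbar_locally p_infty (fun y => Rabs (INR (level_index h y) * h y - 1) < eps)); [auto|].
  generalize (eventually_lt_of_is_lim _ _ _ Hh0 Heps). apply filter_imp. intros y Hy.
  assert (Hhy := tail_level_pos y).
  destruct (level_index_spec h y Hhy) as [Hle Hlt].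
  apply (Rmult_le_compat_r (h y)) in Hle; [|lra].
  apply (Rmult_lt_compat_r (h y)) in Hlt; auto.
  rewrite Rinv_l in Hle, Hlt by lra. apply Rabs_def1; lra.
Qed.

Lemma dilation_error lam y A B e : 0 < lam -> 0 < A -> 0 < e ->
  Rabs (y - B) < e / (2 * lam) * A ->
  Rabs (B - A / g) <= e / (2 * (Rabs (lam - 1) + 1)) * A ->
  Rabs (lam * y - (A * ((lam - 1) / g) + B)) < e * A.
Proof.
  intros Hlam HA He Hy HB. assert (Hl1 := Rabs_pos (lam - 1)).
  replace (lam * y - (A * ((lam - 1) / g) + B)) with (lam * (y - B) + (lam - 1) * (B - A / g))
    by (field; lra).
  eapply Rle_lt_trans; [apply Rabs_triang|]. rewrite !Rabs_mult, (Rabs_pos_eq lam) by lra.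
  assert (lam * Rabs (y - B) < e / 2 * A).
  { apply (Rmult_lt_compat_l lam) in Hy; auto.
    now replace (lam * (e / (2 * lam) * A)) with (e / 2 * A) in Hy by (field; lra). }
  assert (Rabs (lam - 1) * Rabs (B - A / g) <= e / 2 * A).
  { apply Rle_trans with (Rabs (lam - 1) * (e / (2 * (Rabs (lam - 1) + 1)) * A));
      [apply Rmult_le_compat_l; auto|].
    replace (Rabs (lam - 1) * (e / (2 * (Rabs (lam - 1) + 1)) * A))
      with (e / 2 * A * (Rabs (lam - 1) / (Rabs (lam - 1) + 1))) by (field; lra).
    rewrite <- (Rmult_1_r (e / 2 * A)) at 2. apply Rmult_le_compat_l; [nra|].
    apply (Rmult_le_reg_r (Rabs (lam - 1) + 1)); [lra|].
    unfold Rdiv. rewrite Rmult_assoc, Rinv_l by lra. lra. }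
  lra.
Qed.

(* With n = level_index h y the level n h y is close to gev_exponent g 0 = 1, which
   puts y within o(a n) of b n ~ a n / g; hence lam y is within o(a n) of
   a n x1 + b n, where gev_exponent g x1 = lam ^ (-1/g). *)
Lemma level_index_mul_dilated_tends lam : 0 < lam ->
  is_lim (fun y => INR (level_index h y) * h (lam * y)) p_infty (Rpower lam (- / g)).
Proof.
  intros Hlam. set (x1 := (lam - 1) / g).
  assert (Hx1 : 1 + g * x1 = lam) by (unfold x1; field; lra).
  replace (Rpower lam (- / g)) with (gev_exponent g x1) by (unfold gev_exponent; now rewrite Hx1).
  apply is_lim_spec. intros [d Hd].
  cut (Rbar_locally p_infty (fun y =>
    Rabs (INR (level_index h y) * h (lam * y) - gev_exponent g x1) < d)); [auto|].
  destruct (level_close_of_close x1 d ltac:(lra) Hd) as [e [He Hnear]].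
  destruct (close_of_level_close 0 (e / (2 * lam)) ltac:(lra) ltac:(apply Rdiv_lt_0_compat; lra))
    as [d1 [Hd1 Hpin]].
  assert (Hcent := centering_negligible (e / (2 * (Rabs (lam - 1) + 1)))
    ltac:(apply Rdiv_lt_0_compat; generalize (Rabs_pos (lam - 1)); lra)).
  assert (Hlev := proj2 (is_lim_spec _ _ _) level_index_mul_tends_to_1 (mkposreal d1 Hd1)).
  generalize (filter_and _ _ Hlev
    (eventually_along_level_index _ (filter_and _ _ Hnear (filter_and _ _ Hpin Hcent)))).
  apply filter_imp. intros y [Hy (Hn & Hp & Hc)]. simpl in Hy.
  set (n := level_index h y) in *. apply Hn.
  rewrite gev_exponent_0 in Hp. specialize (Hp y Hy).
  rewrite Rmult_0_r, Rplus_0_l in Hp.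
  now apply dilation_error.
Qed.

Lemma tail_regularly_varying : regularly_varying h (- / g).
Proof.
  intros lam Hlam.
  apply is_lim_ext_loc with
    (fun y => INR (level_index h y) * h (lam * y) / (INR (level_index h y) * h y)).
  - generalize (eventually_along_level_index (fun n => (1 <= n)%nat) (ex_intro _ 1%nat (fun n H => H))).
    apply filter_imp. intros y Hy. field. split; [apply Rgt_not_eq, tail_level_pos|].
    apply not_0_INR. lia.
  - replace (Finite (Rpower lam (- / g))) with (Rbar_div (Rpower lam (- / g)) 1)
      by (simpl; f_equal; field).
    apply is_lim_div; [now apply level_index_mul_dilated_tends|apply level_index_mul_tends_to_1| |].
    + simpl. intros H. injection H. lra.
    + simpl. auto.
Qed.

End Normalization.

(** * Tail ratios and quantile ratios *)

Section TailQuantileEquivalence.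
Variables (F0 Fs : R -> R) (g k : R).
Hypothesis HF0 : distribution_function F0.
Hypothesis HFs : distribution_function Fs.
Hypothesis Hg : 0 < g.
Hypothesis Hk : 0 < k.
Hypothesis tail0_pos : forall x, 0 < tail F0 x.
Hypothesis tail0_rv : regularly_varying (tail F0) (- / g).

Lemma eventually_along_U (P : R -> Prop) :
  Rbar_locally p_infty P -> Rbar_locally p_infty (fun t => P (U F0 t)).
Proof.
  intros [M HM]. assert (Hp := tail0_pos (M + 1)).
  exists (Rmax 1 (/ tail F0 (M + 1))). intros t Ht.
  assert (Ht1 : 1 < t) by (generalize (Rmax_l 1 (/ tail F0 (M + 1))); lra).
  apply HM. apply Rlt_le_trans with (M + 1); [lra|].
  apply le_U_of_lt_tail; auto.
  rewrite <- (Rinv_inv (tail F0 (M + 1))). apply Rinv_lt_contravar.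
  - apply Rmult_lt_0_compat; [apply Rinv_0_lt_compat|]; lra.
  - generalize (Rmax_r 1 (/ tail F0 (M + 1))). lra.
Qed.

Lemma eventually_along_inv_tail c (P : R -> Prop) : 0 < c ->
  Rbar_locally p_infty P -> Rbar_locally p_infty (fun y => P (/ (c * tail F0 y))).
Proof.
  intros Hc [T HT].
  set (B := Rabs T + 1).
  assert (HB : 0 < B) by (unfold B; generalize (Rabs_pos T); lra).
  assert (HBc : 0 < / B / c) by (apply Rdiv_lt_0_compat; auto; now apply Rinv_0_lt_compat).
  generalize (eventually_lt_of_is_lim _ _ _ (is_lim_tail F0 HF0) HBc).
  apply filter_imp. intros y Hy. apply HT.
  assert (Hcy : c * tail F0 y < / B).
  { apply (Rmult_lt_compat_l c) in Hy; auto. unfold Rdiv in Hy.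
    now rewrite (Rmult_comm (/ B)), <- Rmult_assoc, Rinv_r, Rmult_1_l in Hy by lra. }
  apply Rle_lt_trans with B; [unfold B; generalize (RRle_abs T); lra|].
  rewrite <- (Rinv_inv B). apply Rinv_lt_contravar; auto.
  apply Rmult_lt_0_compat; [apply Rmult_lt_0_compat; auto|now apply Rinv_0_lt_compat].
Qed.

Lemma eventually_gt_1 : Rbar_locally p_infty (fun t => 1 < t).
Proof. exists 1. auto. Qed.

Lemma quantile_le_of_tail_le mu th : 1 < th ->
  Rbar_locally p_infty (fun y => tail Fs (mu * y) <= tail F0 (th * y)) ->
  Rbar_locally p_infty (fun t => U Fs t <= mu * U F0 t).
Proof.
  intros Hth H.
  generalize (filter_and _ _ (eventually_along_U _ (filter_and _ _ eventually_gt_1 H))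
    eventually_gt_1).
  apply filter_imp. intros t [[Hy Htail] Ht].
  apply U_le_of_tail_le; auto.
  apply Rle_trans with (tail F0 (th * U F0 t)); auto.
  apply tail_le_of_U_lt; auto. nra.
Qed.

Lemma quantile_ge_of_tail_ge mu th : 0 < th < 1 ->
  Rbar_locally p_infty (fun y => tail F0 (th * y) <= tail Fs (mu * y)) ->
  Rbar_locally p_infty (fun t => mu * U F0 t <= U Fs t).
Proof.
  intros Hth H.
  generalize (filter_and _ _ (eventually_along_U _ (filter_and _ _ eventually_gt_1 H))
    eventually_gt_1).
  apply filter_imp. intros t [[Hy Htail] Ht].
  apply le_U_of_lt_tail; auto.
  apply Rlt_le_trans with (tail F0 (th * U F0 t)); auto.
  apply lt_tail_of_lt_U; auto. nra.
Qed.

Lemma tail_le_of_quantile_le mu nu : 0 <= mu < nu ->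
  Rbar_locally p_infty (fun t => U Fs t <= mu * U F0 t) ->
  Rbar_locally p_infty (fun y => tail Fs (nu * y) <= tail F0 y).
Proof.
  intros Hmu H. assert (Hy0 : Rbar_locally p_infty (fun y => 0 < y)) by (exists 0; auto).
  generalize (filter_and _ _ Hy0 (eventually_along_inv_tail 1 _ Rlt_0_1
    (filter_and _ _ eventually_gt_1 H))).
  apply filter_imp. intros y [Hy [Ht Hq]].
  rewrite Rmult_1_l in Ht, Hq. rewrite <- (Rinv_inv (tail F0 y)).
  assert (HU : U F0 (/ tail F0 y) <= y).
  { apply U_le_of_tail_le; auto. rewrite Rinv_inv. lra. }
  apply tail_le_of_U_lt; auto. nra.
Qed.

Lemma tail_ge_of_quantile_ge mu nu c : 0 < nu < mu -> 0 < c < 1 ->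
  Rbar_locally p_infty (fun t => mu * U F0 t <= U Fs t) ->
  Rbar_locally p_infty (fun y => c * tail F0 y <= tail Fs (nu * y)).
Proof.
  intros Hnu Hc H. assert (Hy0 : Rbar_locally p_infty (fun y => 0 < y)) by (exists 0; auto).
  generalize (filter_and _ _ Hy0 (eventually_along_inv_tail c _ (proj1 Hc)
    (filter_and _ _ eventually_gt_1 H))).
  apply filter_imp. intros y [Hy [Ht Hq]].
  assert (Hty := tail0_pos y).
  rewrite <- (Rinv_inv (c * tail F0 y)).
  assert (HU : y <= U F0 (/ (c * tail F0 y))).
  { apply le_U_of_lt_tail; auto. rewrite Rinv_inv. nra. }
  left. apply lt_tail_of_lt_U; auto. nra.
Qed.

Lemma tail_shift_eventually_lt lam c : 0 < lam -> Rpower lam (- / g) < c ->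
  Rbar_locally p_infty (fun y => tail F0 (lam * y) < c * tail F0 y).
Proof.
  intros Hlam Hc. generalize (eventually_lt_of_is_lim _ _ _ (tail0_rv lam Hlam) Hc).
  apply filter_imp. intros y Hy. assert (Hty := tail0_pos y).
  replace (tail F0 (lam * y)) with (tail F0 (lam * y) / tail F0 y * tail F0 y)
    by (field; lra).
  now apply Rmult_lt_compat_r.
Qed.

Lemma tail_shift_eventually_gt lam c : 0 < lam -> c < Rpower lam (- / g) ->
  Rbar_locally p_infty (fun y => c * tail F0 y < tail F0 (lam * y)).
Proof.
  intros Hlam Hc. generalize (eventually_gt_of_is_lim _ _ _ (tail0_rv lam Hlam) Hc).
  apply filter_imp. intros y Hy. assert (Hty := tail0_pos y).
  replace (tail F0 (lam * y)) with (tail F0 (lam * y) / tail F0 y * tail F0 y)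
    by (field; lra).
  now apply Rmult_lt_compat_r.
Qed.

Lemma quantile_upper_of_tail_upper :
  (forall k', k < k' -> Rbar_locally p_infty (fun x => tail Fs x <= k' * tail F0 x)) ->
  forall mu, Rpower k g < mu -> Rbar_locally p_infty (fun t => U Fs t <= mu * U F0 t).
Proof.
  intros Htail mu Hmu. assert (HK := Rpower_pos k g).
  set (lam := (Rpower k g + mu) / 2).
  assert (Hlam : 0 < lam) by (unfold lam; lra).
  assert (Hl : k < Rpower lam (/ g)) by (apply lt_Rpower_inv; auto; unfold lam; lra).
  set (k' := (k + Rpower lam (/ g)) / 2).
  assert (Hshift : Rpower lam (- / g) < / k').
  { rewrite Rpower_Ropp. apply Rinv_lt_contravar; unfold k'; nra. }
  assert (H1 := eventually_scale lam _ Hlam (Htail k' ltac:(unfold k'; lra))).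
  assert (H2 := tail_shift_eventually_lt lam (/ k') Hlam Hshift).
  apply (quantile_le_of_tail_le mu (mu / lam)).
  { apply (Rmult_lt_reg_r lam); auto. unfold Rdiv.
    rewrite Rmult_assoc, Rinv_l by lra. unfold lam. lra. }
  assert (H : Rbar_locally p_infty (fun z => tail Fs (lam * z) <= tail F0 z)).
  { generalize (filter_and _ _ H1 H2). apply filter_imp. intros z [Hs H0].
    simpl in Hs. assert (Hk' : 0 < k') by (unfold k'; lra).
    apply Rle_trans with (k' * tail F0 (lam * z)); auto.
    apply (Rmult_lt_compat_l k') in H0; auto.
    rewrite <- Rmult_assoc, Rinv_r, Rmult_1_l in H0 by lra. lra. }
  apply (eventually_scale (mu / lam)) in H; [|apply Rdiv_lt_0_compat; lra].
  revert H. apply filter_imp. intros y Hy.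
  replace (mu * y) with (lam * (mu / lam * y)) by (field; lra). exact Hy.
Qed.

Lemma quantile_lower_of_tail_lower :
  (forall k', 0 < k' < k -> Rbar_locally p_infty (fun x => k' * tail F0 x <= tail Fs x)) ->
  forall mu, 0 < mu < Rpower k g -> Rbar_locally p_infty (fun t => mu * U F0 t <= U Fs t).
Proof.
  intros Htail mu Hmu.
  set (lam := (mu + Rpower k g) / 2).
  assert (Hlam : 0 < lam) by (unfold lam; lra).
  assert (Hl : Rpower lam (/ g) < k) by (apply Rpower_inv_lt; auto; unfold lam; lra).
  assert (Hl0 := Rpower_pos lam (/ g)).
  set (k' := (Rpower lam (/ g) + k) / 2).
  assert (Hshift : / k' < Rpower lam (- / g)).
  { rewrite Rpower_Ropp. apply Rinv_lt_contravar; unfold k'; nra. }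
  assert (H1 := eventually_scale lam _ Hlam (Htail k' ltac:(unfold k'; lra))).
  assert (H2 := tail_shift_eventually_gt lam (/ k') Hlam Hshift).
  assert (H : Rbar_locally p_infty (fun z => tail F0 z <= tail Fs (lam * z))).
  { generalize (filter_and _ _ H1 H2). apply filter_imp. intros z [Hs H0].
    simpl in Hs. assert (Hk' : 0 < k') by (unfold k'; lra).
    apply Rle_trans with (k' * tail F0 (lam * z)); auto.
    apply (Rmult_lt_compat_l k') in H0; auto.
    rewrite <- Rmult_assoc, Rinv_r, Rmult_1_l in H0 by lra. lra. }
  apply (quantile_ge_of_tail_ge mu (mu / lam)).
  { split; [apply Rdiv_lt_0_compat; lra|].
    apply (Rmult_lt_reg_r lam); auto. unfold Rdiv.
    rewrite Rmult_assoc, Rinv_l by lra. unfold lam. lra. }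
  apply (eventually_scale (mu / lam)) in H; [|apply Rdiv_lt_0_compat; lra].
  revert H. apply filter_imp. intros y Hy.
  replace (mu * y) with (lam * (mu / lam * y)) by (field; lra). exact Hy.
Qed.

Lemma tail_upper_of_quantile_upper :
  (forall mu, Rpower k g < mu -> Rbar_locally p_infty (fun t => U Fs t <= mu * U F0 t)) ->
  forall k', k < k' -> Rbar_locally p_infty (fun x => tail Fs x <= k' * tail F0 x).
Proof.
  intros HU k' Hk'. assert (HK := Rpower_pos k g).
  set (m := (k + k') / 2). set (nu := Rpower m g).
  assert (Hnu : Rpower k g < nu) by (apply Rlt_Rpower_l; auto; unfold m; lra).
  assert (Hnu0 : 0 < nu) by lra.
  assert (Hshift : / k' < Rpower nu (- / g)).
  { rewrite Rpower_Ropp. unfold nu. rewrite Rpower_inv_cancel by (auto; unfold m; lra).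
    apply Rinv_lt_contravar; [apply Rmult_lt_0_compat|]; unfold m; lra. }
  assert (Hmu : 0 <= (Rpower k g + nu) / 2 < nu) by lra.
  assert (H1 := tail_le_of_quantile_le _ nu Hmu (HU ((Rpower k g + nu) / 2) ltac:(lra))).
  assert (H2 := tail_shift_eventually_gt nu (/ k') Hnu0 Hshift).
  apply (eventually_unscale nu (fun x => tail Fs x <= k' * tail F0 x)); auto.
  generalize (filter_and _ _ H1 H2). apply filter_imp. intros y [Hs H0].
  apply (Rmult_lt_compat_l k') in H0; [|lra].
  rewrite <- Rmult_assoc, Rinv_r, Rmult_1_l in H0 by lra. lra.
Qed.

Lemma tail_lower_of_quantile_lower :
  (forall mu, 0 < mu < Rpower k g -> Rbar_locally p_infty (fun t => mu * U F0 t <= U Fs t)) ->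
  forall k', 0 < k' < k -> Rbar_locally p_infty (fun x => k' * tail F0 x <= tail Fs x).
Proof.
  intros HU k' Hk'.
  set (m := (k + k') / 2). set (nu := Rpower m g). set (c := (1 + k' / m) / 2).
  assert (Hm : 0 < m) by (unfold m; lra).
  assert (Hnu : nu < Rpower k g) by (apply Rlt_Rpower_l; auto; unfold m; lra).
  assert (Hnu0 : 0 < nu) by apply Rpower_pos.
  assert (Hkm : k' / m < 1).
  { apply (Rmult_lt_reg_r m); auto. unfold Rdiv.
    rewrite Rmult_assoc, Rinv_l by lra. unfold m. lra. }
  assert (Hc : 0 < c < 1) by (split; unfold c; [generalize (Rdiv_lt_0_compat k' m); lra|lra]).
  assert (Hshift : Rpower nu (- / g) < c / k').
  { rewrite Rpower_Ropp. unfold nu. rewrite Rpower_inv_cancel by auto.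
    apply (Rmult_lt_reg_r (m * k')); [nra|].
    unfold c, Rdiv. field_simplify; try lra. unfold m. lra. }
  assert (Hmu : 0 < nu < (nu + Rpower k g) / 2) by lra.
  assert (H1 := tail_ge_of_quantile_ge _ nu c Hmu Hc (HU ((nu + Rpower k g) / 2) ltac:(lra))).
  assert (H2 := tail_shift_eventually_lt nu (c / k') Hnu0 Hshift).
  apply (eventually_unscale nu (fun x => k' * tail F0 x <= tail Fs x)); auto.
  generalize (filter_and _ _ H1 H2). apply filter_imp. intros y [Hs H0].
  apply (Rmult_lt_compat_l k') in H0; [|lra].
  replace (k' * (c / k' * tail F0 y)) with (c * tail F0 y) in H0 by (field; lra). lra.
Qed.

Theorem tail_ratio_iff_quantile_ratio :
  is_lim (fun x => tail Fs x / tail F0 x) p_infty k <->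
  is_lim (fun t => U Fs t / U F0 t) p_infty (Rpower k g).
Proof.
  assert (Htail : Rbar_locally p_infty (fun x => 0 < tail F0 x)) by (exists 0; auto).
  assert (HU : Rbar_locally p_infty (fun t => 0 < U F0 t))
    by (apply (eventually_along_U (fun y => 0 < y)); exists 0; auto).
  split; intros Hlim.
  - destruct (bounds_of_is_lim_ratio _ _ _ Htail Hlim) as [Hup Hlo].
    apply is_lim_ratio_of_bounds; auto; [apply Rpower_pos| |].
    + now apply quantile_upper_of_tail_upper.
    + apply quantile_lower_of_tail_lower. intros k' Hk'. apply Hlo. lra.
  - destruct (bounds_of_is_lim_ratio _ _ _ HU Hlim) as [Hup Hlo].
    apply is_lim_ratio_of_bounds; auto.
    + now apply tail_upper_of_quantile_upper.
    + apply tail_lower_of_quantile_lower. intros mu Hmu. apply Hlo. lra.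
Qed.

End TailQuantileEquivalence.

Theorem mainTheorem5 (F0 Fs : R -> R) (c s gamma : R) :
  distribution_function F0 -> distribution_function Fs ->
  0 <= s -> 0 < gamma ->
  max_domain_of_attraction F0 gamma ->
  (is_lim (fun x => (1 - Fs x) / (1 - F0 x)) p_infty (exp (c * s))
   <->
   is_lim (fun t => U Fs t / U F0 t) p_infty (exp (c * gamma * s))).
Proof.
  intros HF0 HFs _ Hg Hmda.
  destruct (mda_normalized_tail F0 gamma HF0 Hg Hmda) as [a [b [Ha Hlim]]].
  assert (Hmono := tail_nonincreasing F0 HF0).
  assert (Hpos := tail_level_pos (tail F0) a b gamma Hg Ha Hmono Hlim).
  assert (Hrv := tail_regularly_varying (tail F0) a b gamma Hg Ha Hmono Hlim
    (is_lim_tail F0 HF0)).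
  replace (exp (c * gamma * s)) with (Rpower (exp (c * s)) gamma)
    by (unfold Rpower; rewrite ln_exp; f_equal; ring).
  exact (tail_ratio_iff_quantile_ratio F0 Fs gamma (exp (c * s)) HF0 HFs Hg (exp_pos _)
    Hpos Hrv).
Qed.
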